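(* Let $\alpha,\beta$ be real constants and $F$ a smooth real function of one variable. Consider the cylindrical Westervelt-type equation $$p_{rr}+\frac{1}{r}p_r+F(p)_{tt}+\alpha p_{ttt}+\beta\Big(p_{rr}+\frac{1}{r}p_r\Big)_t=0$$ for $p(r,t)$, $r>0$. Then every smooth solution satisfies the conservation laws $\partial_rT^r+\partial_tT^t=0$ with $(T^r,T^t)$ given by $$\Big(p-rp_r\ln r+\beta\big(p_t-r\ln(r)\,p_{tr}\big),\ -r\ln(r)\,\big(F'(p)p_t+\alpha p_{tt}\big)\Big),$$ $$\Big(t\big(p-rp_r\ln r+\beta(p_t-r\ln(r)\,p_{tr})\big),\ -r\ln(r)\,\big(t(F'(p)p_t+\alpha p_{tt})-F(p)-\alpha p_t\big)\Big),$$ corresponding to the multipliers $r\ln r$ and $rt\ln r$, respectively.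
   Context: Subscripts denote partial derivatives. *)

From Stdlib Require Import Reals List.
From Coquelicot Require Import Coquelicot.
Open Scope R_scope.

Definition dr (f : R -> R -> R) : R -> R -> R :=
  fun r t => Derive (fun x => f x t) r.
Definition dt (f : R -> R -> R) : R -> R -> R :=
  fun r t => Derive (fun y => f r y) t.

(* Iterated partial derivative: true = d/dr, false = d/dt, applied right-to-left. *)
Fixpoint iter_d (l : list bool) (f : R -> R -> R) : R -> R -> R :=
  match l with
  | nil => f
  | b :: l' => (if b then dr else dt) (iter_d l' f)
  end.

Definition smooth_halfplane (f : R -> R -> R) : Prop :=
  forall (l : list bool) (r t : R), 0 < r ->
    ex_derive (fun x => iter_d l f x t) r /\
    ex_derive (fun y => iter_d l f r y) t /\
    continuous (fun z : R * R => iter_d l f (fst z) (snd z)) (r, t).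

Definition smooth1 (F : R -> R) : Prop :=
  forall (n : nat) (x : R), ex_derive (Derive_n F n) x.

Definition westervelt_lhs (alpha beta : R) (F : R -> R) (p : R -> R -> R)
    (r t : R) : R :=
  dr (dr p) r t + dr p r t / r
  + dt (dt (fun r' t' => F (p r' t'))) r t
  + alpha * dt (dt (dt p)) r t
  + beta * dt (fun r' t' => dr (dr p) r' t' + dr p r' t' / r') r t.

Definition T1r (beta : R) (p : R -> R -> R) : R -> R -> R :=
  fun r t => p r t - r * dr p r t * ln r
             + beta * (dt p r t - r * ln r * dr (dt p) r t).
Definition T1t (alpha : R) (F : R -> R) (p : R -> R -> R) : R -> R -> R :=
  fun r t => - r * ln r * (Derive F (p r t) * dt p r t + alpha * dt (dt p) r t).

Definition T2r (beta : R) (p : R -> R -> R) : R -> R -> R :=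
  fun r t => t * (p r t - r * dr p r t * ln r
                  + beta * (dt p r t - r * ln r * dr (dt p) r t)).
Definition T2t (alpha : R) (F : R -> R) (p : R -> R -> R) : R -> R -> R :=
  fun r t => - r * ln r * (t * (Derive F (p r t) * dt p r t + alpha * dt (dt p) r t)
                           - F (p r t) - alpha * dt p r t).

From Stdlib Require Import Reals Lra List.
From Coquelicot Require Import Coquelicot.
Open Scope R_scope.

(* Both conservation laws hold in characteristic form: for every smooth p, not
   only for solutions, div (T1r, T1t) = - r ln r * E(p) and
   div (T2r, T2t) = - r t ln r * E(p), where E(p) is the left-hand side of the
   equation.  The first identity is a direct computation, using the chain rule
   for F(p)_tt and the fact that d/dt commutes with the cylindrical Laplacian
   (Schwarz's theorem).  The second reduces to the first: T2r = t T1r and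
   T2t = t T1t + r ln r (F(p) + alpha p_t), and the time derivative of the
   extra term cancels T1t. *)

Lemma locally_2d_halfplane (r t : R) :
  0 < r -> locally_2d (fun u _ => 0 < u) r t.
Proof.
  intros Hr. exists (mkposreal r Hr). intros u v Hu _. simpl in Hu.
  apply Rabs_def2 in Hu. lra.
Qed.

Lemma smooth_ex_dr (p : R -> R -> R) (l : list bool) (r t : R) :
  smooth_halfplane p -> 0 < r -> ex_derive (fun x => iter_d l p x t) r.
Proof. intros Hp Hr. exact (proj1 (Hp l r t Hr)). Qed.

Lemma smooth_ex_dt (p : R -> R -> R) (l : list bool) (r t : R) :
  smooth_halfplane p -> 0 < r -> ex_derive (fun y => iter_d l p r y) t.
Proof. intros Hp Hr. exact (proj1 (proj2 (Hp l r t Hr))). Qed.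

Ltac partials_of f p :=
  lazymatch f with
  | p => constr:(@nil bool)
  | dr ?g => let l := partials_of g p in constr:(true :: l)
  | dt ?g => let l := partials_of g p in constr:(false :: l)
  end.

Ltac derivable_by_smoothness :=
  repeat match goal with
  | |- _ /\ _ => split
  | |- True => exact I
  | Hr : 0 < ?r |- 0 < ?r => exact Hr
  | HF : smooth1 ?F |- ex_derive ?F _ => exact (HF 0%nat _)
  | HF : smooth1 ?F |- ex_derive (fun x => Derive ?F x) _ => exact (HF 1%nat _)
  | Hp : smooth_halfplane ?p, Hr : 0 < ?r |- ex_derive (fun x => ?f x ?t) ?r =>
      let l := partials_of f p in exact (smooth_ex_dr p l r t Hp Hr)
  | Hp : smooth_halfplane ?p, Hr : 0 < ?r |- ex_derive (fun y => ?f ?r y) ?t =>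
      let l := partials_of f p in exact (smooth_ex_dt p l r t Hp Hr)
  end.

Section Westervelt.

Variable p : R -> R -> R.
Hypothesis Hp : smooth_halfplane p.

Lemma dr_dt_iter_d (l : list bool) (r t : R) :
  0 < r -> dr (dt (iter_d l p)) r t = dt (dr (iter_d l p)) r t.
Proof.
  intros Hr. unfold dr, dt. apply Schwarz.
  - apply (locally_2d_impl (fun u _ => 0 < u)).
    + apply locally_2d_forall. intros u v Hu.
      exact (conj (smooth_ex_dr p l u v Hp Hu)
               (conj (smooth_ex_dt p l u v Hp Hu)
                  (conj (smooth_ex_dr p (false :: l) u v Hp Hu)
                        (smooth_ex_dt p (true :: l) u v Hp Hu)))).
    + now apply locally_2d_halfplane.
  - apply continuity_2d_pt_filterlim.
    exact (proj2 (proj2 (Hp (true :: false :: l) r t Hr))).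
  - apply continuity_2d_pt_filterlim.
    exact (proj2 (proj2 (Hp (false :: true :: l) r t Hr))).
Qed.

Lemma dt_dr (r t : R) : 0 < r -> dt (dr p) r t = dr (dt p) r t.
Proof. intros Hr. symmetry. exact (dr_dt_iter_d nil r t Hr). Qed.

Lemma dt_dr_dr (r t : R) : 0 < r -> dt (dr (dr p)) r t = dr (dr (dt p)) r t.
Proof.
  intros Hr. transitivity (dr (dt (dr p)) r t).
  { symmetry. exact (dr_dt_iter_d (true :: nil) r t Hr). }
  unfold dr at 1 2. apply Derive_ext_loc.
  apply (filter_imp (fun x => 0 < x)).
  - intros x Hx. exact (dt_dr x t Hx).
  - exact (open_gt 0 r Hr).
Qed.

Lemma dt_cyl_laplacian (r t : R) : 0 < r ->
  dt (fun r' t' => dr (dr p) r' t' + dr p r' t' / r') r t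
  = dr (dr (dt p)) r t + dr (dt p) r t / r.
Proof.
  intros Hr. rewrite <- dt_dr_dr, <- dt_dr by exact Hr.
  unfold dt at 1. apply is_derive_unique.
  auto_derive; [derivable_by_smoothness | unfold dt; field; lra].
Qed.

Section Nonlinearity.

Variable F : R -> R.
Hypothesis HF : smooth1 F.

Lemma dt_comp (r t : R) : 0 < r ->
  dt (fun r' t' => F (p r' t')) r t = Derive F (p r t) * dt p r t.
Proof.
  intros Hr. unfold dt. apply is_derive_unique.
  auto_derive; [derivable_by_smoothness | rewrite Rmult_1_l; apply Rmult_comm].
Qed.

Lemma dt_dt_comp (r t : R) : 0 < r ->
  dt (dt (fun r' t' => F (p r' t'))) r t
  = Derive (Derive F) (p r t) * dt p r t ^ 2 + Derive F (p r t) * dt (dt p) r t.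
Proof.
  intros Hr. unfold dt at 1.
  rewrite (Derive_ext _ (fun y => Derive F (p r y) * dt p r y))
    by (intros y; exact (dt_comp r y Hr)).
  apply is_derive_unique.
  auto_derive; [derivable_by_smoothness |].
  unfold dt. change (fun x => Derive F x) with (Derive F).
  ring.
Qed.

Variables alpha beta : R.

Lemma dr_T1r (r t : R) : 0 < r ->
  dr (T1r beta p) r t
  = - ln r * (dr p r t + r * dr (dr p) r t)
    - beta * ln r * (dr (dt p) r t + r * dr (dr (dt p)) r t).
Proof.
  intros Hr. unfold dr at 1, T1r. apply is_derive_unique.
  auto_derive; [derivable_by_smoothness | unfold dr; field; lra].
Qed.

Lemma dt_T1t (r t : R) : 0 < r ->
  dt (T1t alpha F p) r t
  = - r * ln r * (dt (dt (fun r' t' => F (p r' t'))) r t + alpha * dt (dt (dt p)) r t).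
Proof.
  intros Hr. rewrite dt_dt_comp by exact Hr.
  unfold dt at 1, T1t. apply is_derive_unique.
  auto_derive; [derivable_by_smoothness |].
  unfold dt. change (fun x => Derive F x) with (Derive F).
  ring.
Qed.

Lemma div_T1 (r t : R) : 0 < r ->
  dr (T1r beta p) r t + dt (T1t alpha F p) r t
  = - (r * ln r) * westervelt_lhs alpha beta F p r t.
Proof.
  intros Hr. unfold westervelt_lhs.
  rewrite dr_T1r, dt_T1t, dt_cyl_laplacian by exact Hr.
  field. lra.
Qed.

Lemma dt_T2t (r t : R) : 0 < r ->
  dt (T2t alpha F p) r t = t * dt (T1t alpha F p) r t.
Proof.
  intros Hr. rewrite dt_T1t, dt_dt_comp by exact Hr.
  unfold dt at 1, T2t. apply is_derive_unique.
  auto_derive; [derivable_by_smoothness |].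
  unfold dt. change (fun x => F x) with F.
  change (fun x => Derive F x) with (Derive F).
  ring.
Qed.

Lemma div_T2 (r t : R) : 0 < r ->
  dr (T2r beta p) r t + dt (T2t alpha F p) r t
  = - (r * t * ln r) * westervelt_lhs alpha beta F p r t.
Proof.
  intros Hr.
  rewrite dt_T2t by exact Hr.
  change (dr (T2r beta p) r t) with (Derive (fun x => t * T1r beta p x t) r).
  rewrite Derive_scal, <- Rmult_plus_distr_l.
  fold (dr (T1r beta p) r t). rewrite div_T1 by exact Hr.
  ring.
Qed.

End Nonlinearity.

End Westervelt.

Theorem mainTheorem8 (alpha beta : R) (F : R -> R) (p : R -> R -> R) :
  smooth1 F ->
  smooth_halfplane p ->
  (forall r t, 0 < r -> westervelt_lhs alpha beta F p r t = 0) ->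
  forall r t, 0 < r ->
    dr (T1r beta p) r t + dt (T1t alpha F p) r t = 0 /\
    dr (T2r beta p) r t + dt (T2t alpha F p) r t = 0.
Proof.
  intros HF Hp HW r t Hr.
  rewrite (div_T1 p Hp F HF), (div_T2 p Hp F HF), HW by exact Hr.
  split; ring.
Qed.
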